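(* For all $x,y\ge 1$ and $n>\max(x,y)$, the minimum possible number of edges in any task-dependency graph produced by the $(x,y)$ edge-removal process on $n$ vertices is $n-\min(x,y)$.
   Context: A task-dependency graph is a finite directed acyclic graph (no loops, no multiple edges). A vertex is initial if it has in-degree $0$ and terminal if it has out-degree $0$ (an isolated vertex is both). The $(x,y)$ edge-removal process on $n$ vertices: start with the task-dependency graph on $\{1,\dots,n\}$ having all edges $(a,b)$ with $a<b$. Edges are removed uniformly at random, one at a time; a removal that would cause more than $x$ initial vertices or more than $y$ terminal vertices is cancelled. The process terminates when no further edge can be removed; the produced graph is the final graph (over all possible runs). *)

From mathcomp Require Import all_boot all_order.
Set Implicit Arguments. Unset Strict Implicit. Unset Printing Implicit Defensive.

(* Vertices {1,...,n} are represented by 'I_n = {0,...,n-1} (order-preserving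
   relabelling).  A graph on these vertices is its set of directed edges (a,b). *)
Definition graph (n : nat) := {set 'I_n * 'I_n}.

Definition complete_dag (n : nat) : graph n := [set e : 'I_n * 'I_n | (e.1 < e.2)%N].

Definition initial_vertices n (E : graph n) : {set 'I_n} :=
  [set v | [forall u, (u, v) \notin E]].
Definition terminal_vertices n (E : graph n) : {set 'I_n} :=
  [set v | [forall w, (v, w) \notin E]].

Definition admissible (x y n : nat) (E : graph n) : bool :=
  (#|initial_vertices E| <= x) && (#|terminal_vertices E| <= y).

(* One (non-cancelled) step: remove an existing edge e, the result being admissible. *)
Definition removal_step (x y n : nat) (E E' : graph n) : Prop :=
  exists2 e, e \in E & E' = E :\ e /\ admissible x y E'.

Inductive reachable (x y n : nat) : graph n -> Prop :=
  | reach_start : reachable x y (complete_dag n)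
  | reach_step E E' : reachable x y E -> removal_step x y E E' -> reachable x y E'.

Definition final_graph (x y n : nat) (E : graph n) : Prop :=
  reachable x y E /\ forall E', ~ removal_step x y E E'.

From mathcomp Require Import all_boot all_order.
From mathcomp Require Import zify.
Set Implicit Arguments. Unset Strict Implicit. Unset Printing Implicit Defensive.

(* Every vertex that is not initial is the head of an edge, so a graph with at
   most x initial vertices has at least n - x edges, and dually at least n - y.
   Admissibility is inherited by supergraphs, so every graph produced by the
   process is admissible, which gives the lower bound n - min(x,y).
   Conversely, for m = min(x,y) the shift graph with edges (v, v+m) has m
   initial vertices, m terminal vertices and n - m edges.  Deleting the edge
   (v, v+m) makes both v+m initial and v terminal, which the constraint on the
   side achieving the minimum forbids, so the shift graph is final.  It is
   reached from the complete DAG by deleting the other edges one at a time: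
   every intermediate graph contains it, hence is admissible. *)

Section InitialTerminal.

Variable n : nat.
Implicit Types E F : graph n.

Lemma initial_verticesS E F : E \subset F -> initial_vertices F \subset initial_vertices E.
Proof.
move=> sEF; apply/subsetP=> v; rewrite !inE => /forallP noinF.
by apply/forallP=> u; apply: contra (noinF u); apply: (subsetP sEF).
Qed.

Lemma terminal_verticesS E F : E \subset F -> terminal_vertices F \subset terminal_vertices E.
Proof.
move=> sEF; apply/subsetP=> v; rewrite !inE => /forallP nooutF.
by apply/forallP=> w; apply: contra (nooutF w); apply: (subsetP sEF).
Qed.

Lemma compl_initial_vertices E : ~: initial_vertices E = [set e.2 | e in E].
Proof.
apply/setP=> v; rewrite !inE negb_forall.
apply/existsP/imsetP => [[u] | [[u w] uwE ->]]; last by exists u; rewrite negbK.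
by rewrite negbK => uvE; exists (u, v).
Qed.

Lemma compl_terminal_vertices E : ~: terminal_vertices E = [set e.1 | e in E].
Proof.
apply/setP=> v; rewrite !inE negb_forall.
apply/existsP/imsetP => [[w] | [[u w] uwE ->]]; last by exists w; rewrite negbK.
by rewrite negbK => vwE; exists (v, w).
Qed.

Lemma card_initial_vertices_ge E : n <= #|initial_vertices E| + #|E|.
Proof.
rewrite -[n in n <= _]card_ord -(cardsC (initial_vertices E)) leq_add2l.
by rewrite compl_initial_vertices leq_imset_card.
Qed.

Lemma card_terminal_vertices_ge E : n <= #|terminal_vertices E| + #|E|.
Proof.
rewrite -[n in n <= _]card_ord -(cardsC (terminal_vertices E)) leq_add2l.
by rewrite compl_terminal_vertices leq_imset_card.
Qed.

Lemma card_initial_vertices_setD1 E e :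
  e \in E -> {in E, forall f, f.2 = e.2 -> f = e} ->
  #|initial_vertices E| < #|initial_vertices (E :\ e)|.
Proof.
move=> eE only_e; apply/proper_card/properP; split.
  exact/initial_verticesS/subsetDl.
exists e.2; last by rewrite -in_setC compl_initial_vertices imset_f.
rewrite inE; apply/forallP=> u; apply/setD1P=> [[ne_e uE]].
by case/eqP: ne_e; apply: only_e uE _.
Qed.

Lemma card_terminal_vertices_setD1 E e :
  e \in E -> {in E, forall f, f.1 = e.1 -> f = e} ->
  #|terminal_vertices E| < #|terminal_vertices (E :\ e)|.
Proof.
move=> eE only_e; apply/proper_card/properP; split.
  exact/terminal_verticesS/subsetDl.
exists e.1; last by rewrite -in_setC compl_terminal_vertices imset_f.
rewrite inE; apply/forallP=> w; apply/setD1P=> [[ne_e wE]].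
by case/eqP: ne_e; apply: only_e wE _.
Qed.

End InitialTerminal.

Lemma card_ltn_ord n k : k <= n -> #|[set v : 'I_n | v < k]| = k.
Proof.
move=> le_kn; have -> : [set v : 'I_n | v < k] = [set widen_ord le_kn i | i : 'I_k].
  apply/setP=> v; rewrite inE; apply/idP/imsetP => [lt_vk | [i _ ->]]; last exact: (ltn_ord i).
  by exists (Ordinal lt_vk); last exact: val_inj.
by rewrite card_imset ?card_ord // => i j /(congr1 val) /= /val_inj.
Qed.

Section Process.

Variables x y n : nat.
Implicit Types E F S T : graph n.

Lemma admissibleS E F : E \subset F -> admissible x y E -> admissible x y F.
Proof.
move=> sEF /andP[initE termE]; apply/andP; split.
  exact: leq_trans (subset_leq_card (initial_verticesS sEF)) initE.
exact: leq_trans (subset_leq_card (terminal_verticesS sEF)) termE.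
Qed.

Lemma admissible_card_ge E : admissible x y E -> n - minn x y <= #|E|.
Proof.
case/andP=> initE termE.
by have := card_initial_vertices_ge E; have := card_terminal_vertices_ge E; lia.
Qed.

Lemma reachable_admissible E :
  admissible x y (complete_dag n) -> reachable x y E -> admissible x y E.
Proof. by move=> admC; elim=> // E1 E2 _ _ [e _ []]. Qed.

Lemma reachable_supergraph T S :
  admissible x y T -> T \subset S -> S \subset complete_dag n -> reachable x y S.
Proof.
move=> admT; elim: {S}_.+1 {-2}S (ltnSn #|complete_dag n :\: S|) => // k IH S.
move=> missing sTS sSC; have [sCS | /subsetPn[e eC eS]] := boolP (complete_dag n \subset S).
  suff -> : S = complete_dag n by exact: reach_start.
  by apply/eqP; rewrite eqEsubset sSC.
apply: (@reach_step _ _ _ (e |: S)); last first.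
  exists e; first exact: setU11.
  by split; [rewrite setU1K | apply: admissibleS admT].
apply: IH.
- by move: missing; rewrite (cardsD1 e) in_setD eC eS setDDl setUC.
- exact: subset_trans sTS (subsetUr _ _).
- by rewrite subUset sub1set eC.
Qed.

End Process.

Definition shift_graph n m : graph n := [set e : 'I_n * 'I_n | e.1 + m == e.2].

Section ShiftGraph.

Variables n m : nat.

Lemma shift_graph_sub_complete_dag : 0 < m -> shift_graph n m \subset complete_dag n.
Proof. by move=> m_gt0; apply/subsetP=> e; rewrite !inE => /eqP <-; lia. Qed.

Lemma shift_graph_snd_inj : {in shift_graph n m &, injective snd}.
Proof.
move=> [a b] [c d] /[!inE] /= /eqP ab /eqP cd /= eq_bd; subst d.
by congr pair; apply: ord_inj; lia.
Qed.

Lemma shift_graph_fst_inj : {in shift_graph n m &, injective fst}.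
Proof.
move=> [a b] [c d] /[!inE] /= /eqP ab /eqP cd /= eq_ac; subst c.
by congr pair; apply: ord_inj; lia.
Qed.

Lemma initial_shift_graph : initial_vertices (shift_graph n m) = [set v : 'I_n | v < m].
Proof.
apply/setP=> v; rewrite !inE; apply/forallP/idP => [noin | lt_vm u]; last by rewrite inE /=; lia.
rewrite ltnNge; apply/negP => le_mv.
have lt_vmn : v - m < n by have := ltn_ord v; lia.
by move: (noin (Ordinal lt_vmn)); rewrite inE /= subnK // eqxx.
Qed.

Hypothesis le_mn : m <= n.

Lemma card_initial_shift_graph : #|initial_vertices (shift_graph n m)| = m.
Proof. by rewrite initial_shift_graph card_ltn_ord. Qed.

Lemma card_shift_graph : #|shift_graph n m| = n - m.
Proof.
have := cardsC (initial_vertices (shift_graph n m)).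
rewrite compl_initial_vertices card_in_imset; last exact: shift_graph_snd_inj.
by rewrite card_ord card_initial_shift_graph => /(congr1 (subn^~ m)); rewrite addKn.
Qed.

Lemma card_terminal_shift_graph : #|terminal_vertices (shift_graph n m)| = m.
Proof.
have := cardsC (terminal_vertices (shift_graph n m)).
rewrite compl_terminal_vertices card_in_imset; last exact: shift_graph_fst_inj.
by rewrite card_ord card_shift_graph; lia.
Qed.

End ShiftGraph.

Lemma admissible_shift_graph x y n :
  minn x y <= n -> admissible x y (shift_graph n (minn x y)).
Proof.
move=> le_mn; rewrite /admissible card_initial_shift_graph //.
by rewrite card_terminal_shift_graph // geq_minl geq_minr.
Qed.

Lemma final_shift_graph x y n :
  0 < minn x y <= n -> final_graph x y (shift_graph n (minn x y)).
Proof.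
case/andP=> m_gt0 le_mn; have admS := admissible_shift_graph le_mn.
split; first exact: reachable_supergraph admS (subxx _) (shift_graph_sub_complete_dag _ m_gt0).
move=> _ [e eS [-> /andP[initE termE]]].
have := card_initial_vertices_setD1 eS (fun f fS => shift_graph_snd_inj fS eS).
have := card_terminal_vertices_setD1 eS (fun f fS => shift_graph_fst_inj fS eS).
by rewrite card_initial_shift_graph // card_terminal_shift_graph //; lia.
Qed.

Theorem mainTheorem6 (x y n : nat) :
  1 <= x -> 1 <= y -> maxn x y < n ->
  (exists E : graph n, final_graph x y E /\ #|E| = n - minn x y) /\
  (forall E : graph n, final_graph x y E -> n - minn x y <= #|E|).
Proof.
move=> x_gt0 y_gt0 lt_max_n.
have m_gt0 : 0 < minn x y by lia.
have le_mn : minn x y <= n by lia.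
split.
  exists (shift_graph n (minn x y)); split; last exact: card_shift_graph.
  by apply: final_shift_graph; rewrite m_gt0 le_mn.
move=> E [reachE _]; apply/admissible_card_ge/(reachable_admissible _ reachE).
exact: admissibleS (shift_graph_sub_complete_dag _ m_gt0) (admissible_shift_graph le_mn).
Qed.
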